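(* Let $\Gamma$ be a finite group and $\mathbf{E}=\bigoplus_{w\in\Gamma}\mathbf{E}_w$ a finite-dimensional associative $\bar{\mathbb{Q}}_l$-algebra with $1$, with $\dim\mathbf{E}_w=1$ and $\mathbf{E}_w\mathbf{E}_y=\mathbf{E}_{wy}$ for all $w,y$; for each $w$ choose a basis element $b_w$ of $\mathbf{E}_w$ (each $b_w$ is invertible). Let $V,V'$ be simple $\mathbf{E}$-modules and $t:V\to V$, $t':V'\to V'$ invertible $\bar{\mathbb{Q}}_l$-linear maps, and set $N=|\Gamma|^{-1}\sum_{w\in\Gamma}\mathrm{tr}(b_wt,V)\,\mathrm{tr}(t'^{-1}b_w^{-1},V')$. Then $N=0$ if $V,V'$ are not isomorphic $\mathbf{E}$-modules, and $N=1$ if $V=V'$ and $t=t'$. *)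

From HB Require Import structures.
From mathcomp Require Import all_boot all_order all_algebra all_fingroup all_field.
Set Implicit Arguments. Unset Strict Implicit. Unset Printing Implicit Defensive.
Import GRing.Theory.
Local Open Scope ring_scope.

(* A (left) E-module structure on F^n (column vectors): an F-algebra
   morphism rho : E -> 'M[F]_n (linear, unital, multiplicative);
   e acts on a column vector v by v |-> rho e *m v. *)
Definition is_module (F : fieldType) (E : falgType F) (n : nat)
    (rho : E -> 'M[F]_n) : Prop :=
  [/\ forall (a : F) (x y : E), rho (a *: x + y) = a *: rho x + rho y,
      rho 1 = 1%:M
    & forall x y : E, rho (x * y) = rho x *m rho y].

(* A subspace W of column
   vectors is encoded as the row space of U = W^T, so that stability
   rho e *m W <= W reads U *m (rho e)^T <= U. *)
Definition simple_module (F : fieldType) (E : falgType F) (n : nat)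
    (rho : E -> 'M[F]_n) : Prop :=
  is_module rho /\ (0 < n)%N /\
  forall U : 'M[F]_n, (forall e : E, (U *m (rho e)^T <= U)%MS) ->
    (\rank U = 0)%N \/ row_full U.

Definition module_iso (F : fieldType) (E : falgType F) (n n' : nat)
    (rho : E -> 'M[F]_n) (rho' : E -> 'M[F]_n') : Prop :=
  exists Q : 'M[F]_(n', n), [/\ row_free Q, row_full Q &
    forall e : E, Q *m rho e = rho' e *m Q].

Definition Nsum (F : fieldType) (E : falgType F) (gT : finGroupType)
    (b : gT -> E) (n n' : nat) (rho : E -> 'M[F]_n) (t : 'M[F]_n)
    (rho' : E -> 'M[F]_n') (t' : 'M[F]_n') : F :=
  (#|gT|%:R)^-1 *
    \sum_(w : gT) \tr (rho (b w) *m t) * \tr (invmx t' *m rho' (b w)^-1).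

From HB Require Import structures.
From mathcomp Require Import all_boot all_order all_algebra all_fingroup all_field.
From mathcomp Require Import zify ring.
Set Implicit Arguments. Unset Strict Implicit. Unset Printing Implicit Defensive.
Import GRing.Theory.
Local Open Scope ring_scope.

(* For a matrix X, the twisted average
   S(X) = \sum_w rho(b_w) X rho'(b_w^-1) intertwines rho' with rho, because
   b_y b_w is a nonzero multiple of b_(yw) and the two scalars cancel.  Expanding
   both traces entrywise gives N = |Gamma|^-1 \sum_(j,l) (t S(E_jl) t'^-1)_(jl)
   for the matrix units E_jl.  By Schur's lemma S(E_jl) = 0 if V and V' are not
   isomorphic, while for V = V' (over an algebraically closed field) S(X) is the
   scalar |Gamma| tr(X) / n, since conjugation preserves traces; then
   N = tr(t t^-1) / n = 1. *)

Section ModuleMorphism.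
Variables (F : fieldType) (E : falgType F) (n : nat) (rho : E -> 'M[F]_n).
Hypothesis hrho : is_module rho.

Lemma is_module0 : rho 0 = 0.
Proof.
have [rhoDZ _ _] := hrho; have := rhoDZ 1 0 0; rewrite scaler0 addr0 scale1r.
by move/esym/(canRL (addrK _)); rewrite subrr.
Qed.

Lemma is_moduleZ a x : rho (a *: x) = a *: rho x.
Proof. by have [rhoDZ _ _] := hrho; rewrite -[a *: x]addr0 rhoDZ is_module0 addr0. Qed.

Lemma is_module_sum (I : finType) (c : I -> F) (v : I -> E) :
  rho (\sum_i c i *: v i) = \sum_i c i *: rho (v i).
Proof.
have [rhoDZ _ _] := hrho.
by elim/big_rec2: _ => [|i _ x _ <-]; rewrite ?is_module0 ?rhoDZ.
Qed.

Lemma is_moduleVK x : x \is a GRing.unit -> rho x^-1 *m rho x = 1%:M.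
Proof. by have [_ rho1 rhoM] := hrho; move=> x_unit; rewrite -rhoM mulVr. Qed.

End ModuleMorphism.

Section Schur.
Variables (F : fieldType) (E : falgType F) (n n' : nat).
Variables (rho : E -> 'M[F]_n) (rho' : E -> 'M[F]_n').
Hypotheses (hV : simple_module rho) (hV' : simple_module rho').
Variable X : 'M[F]_(n, n').
Hypothesis hX : forall e, rho e *m X = X *m rho' e.

(* [<<X^T>>] and [kermx X^T] encode the image and the kernel of [X] as row spaces. *)
Lemma simple_intertwiner : X = 0 \/ row_free X /\ row_full X.
Proof.
have [_ [_ simpleV]] := hV; have [_ [_ simpleV']] := hV'.
have img_stable e : (<<X^T>> *m (rho e)^T <= <<X^T>>)%MS.
  by rewrite (eqmxMr _ (genmxE _)) genmxE -trmx_mul hX trmx_mul submxMl.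
have ker_stable e : (kermx X^T *m (rho' e)^T <= kermx X^T)%MS.
  apply/sub_kermxP; rewrite -mulmxA -trmx_mul -hX trmx_mul mulmxA.
  by rewrite mulmx_ker mul0mx.
have rank_le : (\rank X <= n')%N by rewrite rank_leq_col.
have [|] := simpleV _ img_stable; rewrite /row_full genmxE mxrank_tr.
  by move/eqP; rewrite mxrank_eq0 => /eqP ->; left.
move=> /eqP rankX.
have [|] := simpleV' _ ker_stable; rewrite /row_full mxrank_ker mxrank_tr.
  by move=> ker0; right; rewrite /row_free /row_full; split; apply/eqP; lia.
move=> /eqP ker_full; left; apply/eqP; rewrite -mxrank_eq0; apply/eqP; lia.
Qed.

Lemma intertwiner_eq0 : ~ module_iso rho rho' -> X = 0.
Proof.
have [//|[freeX fullX] not_iso] := simple_intertwiner; exfalso; apply: not_iso.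
have eq_n : n = n' by apply/eqP; rewrite -(eqP freeX) (eqP fullX).
move: rho' X hX freeX fullX; rewrite -eq_n => sigma Y hY freeY _.
have Y_unit : Y \in unitmx by rewrite -row_free_unit.
exists (invmx Y); split; rewrite ?row_free_unit ?row_full_unit ?unitmx_inv //.
by move=> e; rewrite -[LHS](mulmxK Y_unit) -(mulmxA _ (rho e)) hY mulmxA mulVmx // mul1mx.
Qed.

End Schur.

Definition commutant_scalar (F : fieldType) (E : falgType F) n
    (rho : E -> 'M[F]_n) : Prop :=
  forall Y : 'M[F]_n, (forall e, rho e *m Y = Y *m rho e) -> exists mu, Y = mu%:M.

Lemma simple_commutant_scalar (F : closedFieldType) (E : falgType F) n
    (rho : E -> 'M[F]_n) :
  simple_module rho -> commutant_scalar rho.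
Proof.
move=> hV Y hY; have [_ [n_gt0 _]] := hV.
have [mu] : exists mu, root (char_poly Y) mu.
  by apply/closed_rootP; rewrite size_char_poly; case: n n_gt0 {rho hV Y hY}.
rewrite -eigenvalue_root_char => /eigenvalueP [v v_eigen v_neq0]; exists mu.
have hYmu e : rho e *m (Y - mu%:M) = (Y - mu%:M) *m rho e.
  by rewrite mulmxBr mulmxBl hY mul_mx_scalar mul_scalar_mx.
have [/eqP|[freeYmu _]] := simple_intertwiner hV hV hYmu; first by rewrite subr_eq0 => /eqP.
rewrite row_free_unit in freeYmu; case/eqP: v_neq0.
by rewrite -(mulmxK freeYmu v) mulmxBr v_eigen mul_mx_scalar subrr mul0mx.
Qed.

Lemma mulmx_delta_mxE (R : nzRingType) m n n' p (A : 'M[R]_(m, n))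
    (B : 'M[R]_(n', p)) j l i k :
  (A *m delta_mx j l *m B) i k = A i j * B l k.
Proof.
rewrite !mxE (bigD1 l) //= big1 => [|l' /negbTE nl'].
  rewrite !mxE (bigD1 j) //= big1 => [|j' /negbTE nj']; last by rewrite mxE nj' mulr0.
  by rewrite mxE !eqxx mulr1 !addr0.
by rewrite mxE big1 ?mul0r // => j' _; rewrite mxE nl' andbF mulr0.
Qed.

Lemma mul_mxtrace_delta (R : comNzRingType) n n' (A t : 'M[R]_n) (s B : 'M[R]_n') :
  \tr (A *m t) * \tr (s *m B) =
  \sum_j \sum_l (t *m (A *m delta_mx j l *m B) *m s) j l.
Proof.
transitivity (\sum_i \sum_k \sum_j \sum_l t j i * A i j * (s k l * B l k)).
  rewrite /mxtrace big_distrlr /=; apply: eq_bigr => i _; apply: eq_bigr => k _.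
  rewrite !mxE big_distrlr /=; apply: eq_bigr => j _; apply: eq_bigr => l _.
  by rewrite [A i j * _]mulrC.
rewrite (eq_bigr _ (fun i _ => exchange_big _ _ _ _ _ _)) /= exchange_big /=.
apply: eq_bigr => j _; rewrite (eq_bigr _ (fun i _ => exchange_big _ _ _ _ _ _)) /=.
rewrite exchange_big; apply: eq_bigr => l _; rewrite exchange_big /= mxE.
apply: eq_bigr => k _; rewrite mxE big_distrl /=; apply: eq_bigr => i _.
by rewrite mulmx_delta_mxE; ring.
Qed.

Lemma mxtrace_delta (R : nzRingType) n (j l : 'I_n) :
  \tr (delta_mx j l : 'M[R]_n) = (j == l)%:R.
Proof.
rewrite /mxtrace (bigD1 j) //= big1 => [|i /negbTE i_neq_j].
  by rewrite mxE eqxx addr0.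
by rewrite mxE i_neq_j.
Qed.

Lemma sum_mxtrace_delta (R : nzRingType) n (M : 'M[R]_n) :
  \sum_j \sum_l \tr (delta_mx j l : 'M[R]_n) * M j l = \tr M.
Proof.
apply: eq_bigr => j _; rewrite (bigD1 j) //= big1 => [|l /negbTE l_neq_j].
  by rewrite mxtrace_delta eqxx mul1r addr0.
by rewrite mxtrace_delta eq_sym l_neq_j mul0r.
Qed.

Section GradedAlgebra.
Variables (F : fieldType) (gT : finGroupType) (E : falgType F).
Variables (Es : gT -> {vspace E}) (b : gT -> E).
Hypothesis hdim : forall w, \dim (Es w) = 1%N.
Hypothesis hmul : forall w y, prodv (Es w) (Es y) = Es (w * y)%g.
Hypothesis hsum : (\sum_w Es w)%VS = fullv.
Hypothesis hb : forall w, b w \in Es w /\ b w != 0.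

Lemma graded_line w : Es w = <[b w]>%VS.
Proof.
have [bw_in bw_neq0] := hb w.
by apply/eqP; rewrite eq_sym eqEdim -memvE bw_in dim_vline bw_neq0 hdim.
Qed.

Lemma graded_mul w y : exists2 c : F, c != 0 & b w * b y = c *: b (w * y)%g.
Proof.
have line_wy : <[b w * b y]>%VS = <[b (w * y)%g]>%VS.
  by rewrite -prodv_line -!graded_line hmul.
have /vlineP[c bwy] : b w * b y \in <[b (w * y)%g]>%VS by rewrite -line_wy memv_line.
exists c => //; apply/eqP => c0; have := dim_vline (b w * b y).
by rewrite line_wy dim_vline (hb _).2 bwy c0 scale0r eqxx.
Qed.

Lemma graded_span e : exists c : gT -> F, e = \sum_w c w *: b w.
Proof.
have /memv_sumP[v v_in ->] : e \in (\sum_w Es w)%VS by rewrite hsum memvf.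
have coef w : exists c, v w == c *: b w.
  have /vlineP[c ->] : v w \in <[b w]>%VS by rewrite -graded_line v_in.
  by exists c.
by exists (fun w => xchoose (coef w)); apply: eq_bigr => w _; apply/eqP/(xchooseP (coef w)).
Qed.

(* [f := c1^-1 *: b 1] is an idempotent fixing every [b w], hence a left unit, hence [1]. *)
Lemma graded_one : exists2 c : F, c != 0 & b 1%g = c *: 1.
Proof.
have [c1 c1_neq0] := graded_mul 1 1; rewrite mulg1 => b11.
pose f := c1^-1 *: b 1%g.
have f_idem : f * f = f by rewrite /f -scalerAl -scalerAr b11 !scalerA divfK.
have f_left w : f * b w = b w.
  have [d d_neq0] := graded_mul 1 w; rewrite mul1g => b1w.
  have fbw : f * b w = (c1^-1 * d) *: b w by rewrite /f -scalerAl b1w scalerA.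
  have := congr1 (fun x => x * b w) f_idem; rewrite -mulrA fbw -scalerAr fbw scalerA.
  move/eqP; rewrite -subr_eq0 -scalerBl scaler_eq0 (negbTE (hb w).2) orbF.
  rewrite -{3}[_ * d]mulr1 -mulrBr mulf_eq0 subr_eq0 mulf_eq0 invr_eq0.
  rewrite (negbTE c1_neq0) (negbTE d_neq0) => /eqP d1.
  by rewrite d1 scale1r.
have f1 : f = 1.
  have [c one_sum] := graded_span 1.
  rewrite -[f]mulr1 [in LHS]one_sum mulr_sumr [RHS]one_sum.
  by apply: eq_bigr => w _; rewrite -scalerAr f_left.
by exists c1; rewrite // -[b _]scale1r -(mulfV c1_neq0) -scalerA -/f f1.
Qed.

Lemma graded_unit w : b w \is a GRing.unit.
Proof.
have [c1 c1_neq0 b1] := graded_one.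
have [c c_neq0] := graded_mul w w^-1; rewrite mulgV b1 scalerA => right_inv.
have [c' c'_neq0] := graded_mul w^-1 w; rewrite mulVg b1 scalerA => left_inv.
have cc' : c * c1 = c' * c1.
  have := mulrA (b w) (b w^-1%g) (b w); rewrite right_inv left_inv -scalerAl -scalerAr.
  rewrite mul1r mulr1 => /eqP; rewrite -subr_eq0 -scalerBl scaler_eq0 (negbTE (hb w).2).
  by rewrite orbF subr_eq0 => /eqP.
have cc1_neq0 : c * c1 != 0 by rewrite mulf_neq0.
apply/unitrP; exists ((c * c1)^-1 *: b w^-1%g).
by rewrite -scalerAl -scalerAr left_inv right_inv -cc' !scalerA mulVf // scale1r.
Qed.

Definition average n n' (rho : E -> 'M[F]_n) (rho' : E -> 'M[F]_n')
    (X : 'M[F]_(n, n')) : 'M[F]_(n, n') :=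
  \sum_w rho (b w) *m X *m rho' (b w)^-1.

Lemma average_intertwines n n' (rho : E -> 'M[F]_n) (rho' : E -> 'M[F]_n') :
    is_module rho -> is_module rho' -> forall X e,
  rho e *m average rho rho' X = average rho rho' X *m rho' e.
Proof.
move=> hrho hrho' X; have [_ _ rhoM] := hrho; have [_ _ rho'M] := hrho'.
have shift y w : rho (b y) *m (rho (b w) *m X *m rho' (b w)^-1) =
    rho (b (y * w)%g) *m X *m rho' (b (y * w)%g)^-1 *m rho' (b y).
  have [c c_neq0 byw] := graded_mul y w.
  have bw_inv : (b w)^-1 = (b (y * w)%g)^-1 * (c^-1 *: b y).
    rewrite -[LHS](mulKr (graded_unit (y * w))); congr (_ * _).
    rewrite -[b (y * w)%g]scale1r -(mulVf c_neq0) -scalerA -byw -scalerAl.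
    by rewrite mulrK ?graded_unit.
  rewrite bw_inv rho'M is_moduleZ // !mulmxA -rhoM byw is_moduleZ //.
  by rewrite -scalemxAr -!scalemxAl scalerA mulVf // scale1r.
have average_by y : rho (b y) *m average rho rho' X = average rho rho' X *m rho' (b y).
  rewrite /average mulmx_sumr mulmx_suml [in RHS](reindex_inj (mulgI y)) /=.
  by apply: eq_bigr => w _; rewrite shift.
move=> e; have [c ->] := graded_span e.
rewrite !is_module_sum // mulmx_suml mulmx_sumr.
by apply: eq_bigr => y _; rewrite -scalemxAl average_by scalemxAr.
Qed.

Lemma mxtrace_average n (rho : E -> 'M[F]_n) : is_module rho -> forall X,
  \tr (average rho rho X) = #|gT|%:R * \tr X.
Proof.
move=> hrho X; rewrite raddf_sum /=.
under eq_bigr do rewrite mxtrace_mulC mulmxA is_moduleVK ?graded_unit // mul1mx.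
by rewrite sumr_const mulr_natl.
Qed.

Lemma average_scalar n (rho : E -> 'M[F]_n) :
    is_module rho -> commutant_scalar rho -> n%:R != 0 :> F -> forall X,
  average rho rho X = (#|gT|%:R / n%:R * \tr X)%:M.
Proof.
move=> hrho scalar_rho n_neq0 X.
have [mu avgX] := scalar_rho _ (average_intertwines hrho hrho X).
have := mxtrace_average hrho X; rewrite avgX mxtrace_scalar -[mu *+ n]mulr_natr.
by move=> trace_eq; rewrite mulrAC -trace_eq mulfK.
Qed.

Lemma Nsum_average n n' (rho : E -> 'M[F]_n) (rho' : E -> 'M[F]_n') t t' :
  Nsum b rho t rho' t' = #|gT|%:R^-1 *
    \sum_j \sum_l (t *m average rho rho' (delta_mx j l) *m invmx t') j l.
Proof.
rewrite /Nsum; congr (_ * _); under eq_bigr do rewrite mul_mxtrace_delta.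
rewrite exchange_big; apply: eq_bigr => j _; rewrite exchange_big; apply: eq_bigr => l _.
by rewrite /average mulmx_sumr mulmx_suml summxE.
Qed.

End GradedAlgebra.

Theorem mainTheorem13
    (F : closedFieldType) (hF : [pchar F] =i pred0)
    (gT : finGroupType) (E : falgType F)
    (Es : gT -> {vspace E})
    (hdim : forall w : gT, \dim (Es w) = 1%N)
    (hmul : forall w y : gT, prodv (Es w) (Es y) = Es (w * y)%g)
    (hsum : (\sum_(w : gT) Es w)%VS = fullv)
    (hdirect : directv (\sum_(w : gT) Es w))
    (b : gT -> E)
    (hb : forall w : gT, b w \in Es w /\ b w != 0)
    (n n' : nat) (rho : E -> 'M[F]_n) (rho' : E -> 'M[F]_n')
    (hV : simple_module rho) (hV' : simple_module rho')
    (t : 'M[F]_n) (t' : 'M[F]_n')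
    (ht : t \in unitmx) (ht' : t' \in unitmx) :
  (~ module_iso rho rho' -> Nsum b rho t rho' t' = 0) /\
  Nsum b rho t rho t = 1.
Proof.
have [[hrho _] [hrho' _]] := (hV, hV').
split=> [not_iso|].
  rewrite Nsum_average big1 ?mulr0 // => j _; rewrite big1 // => l _.
  have avg_intertwines := average_intertwines hdim hmul hsum hb hrho hrho' (delta_mx j l).
  by rewrite (intertwiner_eq0 hV hV' avg_intertwines) // mulmx0 mul0mx mxE.
have nat_neq0 k : (0 < k)%N -> k%:R != 0 :> F by rewrite (pcharf0P _).1 // -lt0n.
have n_neq0 : n%:R != 0 :> F by apply: nat_neq0; case: hV => _ [].
have gT_neq0 : #|gT|%:R != 0 :> F by apply/nat_neq0/card_gt0P; exists 1%g.
have avg_scalar := average_scalar hdim hmul hsum hb hrho (simple_commutant_scalar hV) n_neq0.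
rewrite Nsum_average; set c := _ / _ in avg_scalar.
under eq_bigr do under eq_bigr do rewrite avg_scalar mul_mx_scalar -scalemxAl mxE -mulrA.
under eq_bigr do rewrite -mulr_sumr.
by rewrite -mulr_sumr sum_mxtrace_delta mulmxV // mxtrace1 /c divfK // mulVf.
Qed.
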